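(* Let $L$ be a positive integer and let $J \subseteq [L]$ be a nonempty subset with $l := |J|$. Then for every $\alpha \in (0,1)$ there exist $j_1, j_2 \in J$ such that (i) $l/2 \le j_1 \le j_2 \le (1+\alpha) j_1$; (ii) $|J \cap [j_1, j_2]| \ge c_\alpha \dfrac{l}{\log(2L/l)}$, where $c_\alpha > 0$ depends only on $\alpha$.
   Context: $[L] = \{1,\ldots,L\}$; $[j_1,j_2]$ denotes the set of integers between $j_1$ and $j_2$. Logarithms are to base $2$. *)

From Stdlib Require Import Reals.
From mathcomp Require Import all_boot.
Open Scope R_scope.

Definition log2 (x : R) : R := ln x / ln 2.

(* |J ∩ [j1, j2]| for J given as a duplicate-free list of naturals. *)
Definition count_in (J : seq nat) (j1 j2 : nat) : nat :=
  size [seq j <- J | (j1 <= j)%N && (j <= j2)%N].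

(* Let l = |J| and suppose every window [j1, j2] of J with
   l/2 <= j1 <= j2 <= (1 + alpha) j1 holds at most M elements of J.  Greedily cover the elements of J above a
   threshold a: take the least j1 >= a in J and the largest j2 <= (1 + alpha) j1
   in J; every element of J above a lies in [j1, j2] or above (1 + alpha) a.
   Starting from a = l/2 and repeating K ~ log_{1+alpha}(2L/l) times pushes the
   threshold past L, so J has at most K M elements above l/2.  Since at least
   l/2 elements of J are >= l/2, this forces M >~ l / log(2L/l). *)
From Stdlib Require Import Reals Lra ZArith.
From mathcomp Require Import all_boot zify.
Open Scope R_scope.

Definition Rleb (x y : R) : bool := if Rle_dec x y then true else false.

Lemma RlebP x y : reflect (x <= y) (Rleb x y).
Proof. by rewrite /Rleb; case: Rle_dec => H; constructor. Qed.

Definition count_ge (a : R) (J : seq nat) : nat := count (fun j => Rleb a (INR j)) J.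

Lemma leq_count_add_in (T : eqType) (p q1 q2 : pred T) (s : seq T) :
  {in s, forall x, p x -> q1 x || q2 x} ->
  (count p s <= count q1 s + count q2 s)%N.
Proof.
move=> pq.
have -> : count p s = count (predI p (predU q1 q2)) s.
  by apply: eq_in_count => x xs /=; case px: (p x); rewrite //= pq.
rewrite -count_predUI; apply: leq_trans (leq_addr _ _).
by apply: sub_count => x /andP[].
Qed.

Lemma leq_count_uniq_pos (s : seq nat) (n : nat) :
  uniq s -> all (fun j => 0 < j)%N s -> (count (fun j => j <= n) s <= n)%N.
Proof.
move=> s_uniq /allP s_pos; rewrite -size_filter -[X in (_ <= X)%N](size_iota 1 n).
apply: uniq_leq_size; first exact: filter_uniq.
by move=> x; rewrite mem_filter mem_iota => /andP[xn /s_pos]; lia.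
Qed.

Lemma half_le_count_ge (J : seq nat) :
  uniq J -> all (fun j => 0 < j)%N J ->
  INR (size J) / 2 <= INR (count_ge (INR (size J) / 2) J).
Proof.
move=> J_uniq J_pos; set l := size J.
have -> : count_ge (INR l / 2) J = count (fun j => l <= 2 * j)%N J.
  apply: eq_count => j /=; apply/RlebP/idP => [le_lj | /leP/le_INR].
    by apply/leP/INR_le; rewrite mult_INR /=; lra.
  by rewrite mult_INR /=; lra.
have small : (count (predC (fun j => l <= 2 * j)%N) J <= l %/ 2)%N.
  apply: leq_trans _ (leq_count_uniq_pos J (l %/ 2) J_uniq J_pos).
  by apply: sub_count => j /=; lia.
have := count_predC (fun j => l <= 2 * j)%N J; rewrite -/l => total.
have /leP/le_INR : (l <= 2 * count (fun j => l <= 2 * j) J)%N by lia.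
by rewrite mult_INR /=; lra.
Qed.

Section GreedyWindows.

Variables (J : seq nat) (L : nat) (r M : R).
Hypotheses (J_le_L : all (fun j => j <= L)%N J) (r_ge1 : 1 <= r) (M_ge0 : 0 <= M).

Definition window (a : R) (j1 j2 : nat) : Prop :=
  [/\ j1 \in J, j2 \in J, a <= INR j1, (j1 <= j2)%N & INR j2 <= r * INR j1].

Lemma greedy_window (a : R) :
  has (fun j => Rleb a (INR j)) J ->
  exists j1 j2, window a j1 j2 /\
    (count_ge a J <= count_in J j1 j2 + count_ge (r * INR j1) J)%N.
Proof.
move=> /hasP[x xJ ax].
have : exists j, (j \in J) && Rleb a (INR j) by exists x; rewrite xJ.
case/ex_minnP=> j1 /andP[j1J /RlebP a_j1] j1_min.
have r_j1 : INR j1 <= r * INR j1 by have := pos_INR j1; nra.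
pose below j := [&& j \in J, (j1 <= j)%N & Rleb (INR j) (r * INR j1)].
have ex_below : exists j, below j by exists j1; rewrite /below j1J leqnn; apply/RlebP.
have below_le_L j : below j -> (j <= L)%N.
  by case/and3P=> jJ _ _; move/allP: J_le_L; apply.
case: (ex_maxnP ex_below below_le_L) => j2 /and3P[j2J j12 /RlebP j2_r] j2_max.
exists j1, j2; split; first by [].
rewrite /count_in size_filter; apply: leq_count_add_in => j jJ /RlebP a_j.
have j1_j : (j1 <= j)%N by apply: j1_min; rewrite jJ; apply/RlebP.
rewrite j1_j /=; case: leqP => //= j2_lt_j; apply/RlebP/Rnot_lt_le => j_lt.
have : (j <= j2)%N by apply: j2_max; rewrite /below jJ j1_j; apply/RlebP; lra.
by rewrite leqNgt j2_lt_j.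
Qed.

Lemma heavy_window (k : nat) (a : R) :
  INR L < a * r ^ k -> INR k * M < INR (count_ge a J) ->
  exists j1 j2, window a j1 j2 /\ M < INR (count_in J j1 j2).
Proof.
elim: k a => [|k IH] a L_lt many.
  rewrite INR_0 Rmult_0_l in many; rewrite pow_O Rmult_1_r in L_lt.
  have : has (fun j => Rleb a (INR j)) J.
    by rewrite has_count -/(count_ge a J); apply/ltP/INR_lt; rewrite INR_0.
  case/hasP=> j jJ /RlebP a_j; move/allP: J_le_L => /(_ j jJ) /leP /le_INR; lra.
have : has (fun j => Rleb a (INR j)) J.
  rewrite has_count -/(count_ge a J); apply/ltP/INR_lt; rewrite INR_0.
  by have := pos_INR k.+1; nra.
case/greedy_window=> j1 [j2 [[j1J j2J a_j1 j12 j2_r] cover]].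
case: (Rlt_le_dec M (INR (count_in J j1 j2))) => [heavy | light].
  by exists j1, j2.
have [||j1' [j2' [[j1'J j2'J r_j1' j12' j2'_r] heavy]]] := IH (r * INR j1).
- have gap : 0 <= (INR j1 - a) * r ^ k by apply: Rmult_le_pos; [lra | apply: pow_le; lra].
  simpl in L_lt; nra.
- by move/leP/le_INR: cover; rewrite plus_INR S_INR in many *; lra.
- exists j1', j2'; split => //; split => //; have := pos_INR j1; nra.
Qed.

End GreedyWindows.

Lemma ln_gt0 (x : R) : 1 < x -> 0 < ln x.
Proof. by move=> x_gt1; rewrite -ln_1; apply: ln_increasing; lra. Qed.

Lemma ln_le (x y : R) : 0 < x -> x <= y -> ln x <= ln y.
Proof.
move=> x_gt0 [x_lt_y | ->]; last exact: Rle_refl.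
by apply/Rlt_le/ln_increasing.
Qed.

Lemma pow_gt_ln_bound (r T : R) :
  1 < r -> 1 <= T -> exists K : nat, T < r ^ K /\ INR K * ln r <= ln T + ln r.
Proof.
move=> r_gt1 T_ge1.
have ln_r := ln_gt0 _ r_gt1.
have ln_T : 0 <= ln T by rewrite -ln_1; apply: ln_le; lra.
have ratio_ge0 : 0 <= ln T / ln r by apply: Rle_mult_inv_pos.
have ratio_eq : ln T / ln r * ln r = ln T by field; lra.
have [up_gt up_le] := archimed (ln T / ln r).
have up_ge0 : (0 <= up (ln T / ln r))%Z by apply: le_IZR; lra.
set K := Z.to_nat (up (ln T / ln r)).
have K_eq : INR K = IZR (up (ln T / ln r)) by rewrite INR_IZR_INZ Z2Nat.id.
exists K; split.
  rewrite -Rpower_pow /Rpower; last lra.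
  rewrite -[X in X < _](exp_ln T); last lra.
  by apply: exp_increasing; rewrite K_eq; nra.
by rewrite K_eq; nra.
Qed.

Definition window_const (r : R) : R := ln r / (4 * (ln r + ln 2)).

Lemma window_const_gt0 (r : R) : 1 < r -> 0 < window_const r.
Proof.
move=> r_gt1; have := ln_gt0 _ r_gt1; have : 0 < ln 2 by apply: ln_gt0; lra.
by move=> ln_2 ln_r; apply: Rdiv_lt_0_compat; lra.
Qed.

Lemma window_budget (r T l : R) (K : nat) :
  1 < r -> 2 <= T -> 0 <= l -> INR K * ln r <= ln T + ln r ->
  INR K * (window_const r * (l / log2 T)) <= l / 4.
Proof.
move=> r_gt1 T_ge2 l_ge0 K_le.
have ln_r := ln_gt0 _ r_gt1.
have ln_2 : 0 < ln 2 by apply: ln_gt0; lra.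
have ln_T : ln 2 <= ln T by apply: ln_le; lra.
have weight : 0 <= l / (4 * (ln r + ln 2) * ln T).
  by apply: Rle_mult_inv_pos => //; nra.
rewrite /window_const /log2.
have -> : INR K * (ln r / (4 * (ln r + ln 2)) * (l / (ln T / ln 2)))
          = INR K * ln r * ln 2 * (l / (4 * (ln r + ln 2) * ln T)).
  by field; repeat split; lra.
have -> : l / 4 = (ln r + ln 2) * ln T * (l / (4 * (ln r + ln 2) * ln T)).
  by field; split; lra.
apply: Rmult_le_compat_r => //; nra.
Qed.

Theorem lemma3p2 :
  forall alpha : R, 0 < alpha < 1 ->
  exists c : R, 0 < c /\
    forall (L : nat) (J : seq nat),
      (0 < L)%N ->
      uniq J ->
      J <> [::] ->
      all (fun j => (1 <= j)%N && (j <= L)%N) J ->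
      exists j1 j2 : nat,
        (j1 \in J) /\ (j2 \in J) /\
        INR (size J) / 2 <= INR j1 /\ (j1 <= j2)%N /\
        INR j2 <= (1 + alpha) * INR j1 /\
        INR (count_in J j1 j2) >=
          c * (INR (size J) / log2 (2 * INR L / INR (size J))).
Proof.
move=> alpha [alpha_gt0 alpha_lt1]; have r_gt1 : 1 < 1 + alpha by lra.
exists (window_const (1 + alpha)); split; first exact: window_const_gt0.
move=> L J _ J_uniq J_ne0 J_range.
have /andP[J_pos J_le_L] : all (fun j => 0 < j)%N J && all (fun j => j <= L)%N J.
  by rewrite -all_predI.
have half := half_le_count_ge J J_uniq J_pos.
set l := INR (size J) in half *.
have l_gt0 : 0 < l by apply/lt_0_INR/ltP; rewrite lt0n size_eq0; apply/eqP.
have l_le_L : l <= INR L.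
  apply/le_INR/leP; move: (J_le_L); rewrite all_count => /eqP <-.
  exact: leq_count_uniq_pos.
set T := 2 * INR L / l.
have T_eq : l / 2 * T = INR L by rewrite /T; field; lra.
have T_ge2 : 2 <= T by nra.
have [K [T_lt K_le]] := pow_gt_ln_bound (1 + alpha) T r_gt1 ltac:(lra).
have budget := window_budget (1 + alpha) T l K r_gt1 T_ge2 (Rlt_le _ _ l_gt0) K_le.
set M := window_const (1 + alpha) * (l / log2 T) in budget *.
have M_ge0 : 0 <= M.
  apply/Rlt_le/Rmult_lt_0_compat; first exact: window_const_gt0.
  apply: Rdiv_lt_0_compat => //; apply: Rdiv_lt_0_compat; apply: ln_gt0; lra.
have [||j1 [j2 [[j1J j2J l_j1 j12 j2_r] heavy]]] :=
  heavy_window J L (1 + alpha) M J_le_L (Rlt_le _ _ r_gt1) M_ge0 K (l / 2).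
- by rewrite -T_eq; nra.
- lra.
by exists j1, j2; do !split => //; lra.
Qed.
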